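(* Let $1\le n\le\omega$. There is a Borel reduction $\psi\colon X_n\to X_n$ of $F_n$ to $F_n$ such that for every $x$ in the image of $\psi$, $x(i)$ is injective for all $i<n$ and $x(i)$ is separated for all $0<i<n$.
   Context: Let $\mathbb N=\{0,1,2,\dots\}$ and identify $2^{\mathbb N}$ with $\mathcal P(\mathbb N)$. For $1\le m\le\omega$ and $x\in((2^{\mathbb N})^{\mathbb N})^m$ define recursively: $A^x_1=\{x(0)(k):k\in\mathbb N\}\subseteq 2^{\mathbb N}$; for $1\le j<m$ and $l\in\mathbb N$, $a^{x,l}_1=\{x(0)(k):x(1)(l)(k)=1\}$ and $a^{x,l}_{j}=\{a^{x,k}_{j-1}:x(j)(l)(k)=1\}$ for $j\ge 2$; and $A^x_{j+1}=\{a^{x,k}_j:k\in\mathbb N\}$ for $1\le j<m$. Let $X_1=(2^{\mathbb N})^{\mathbb N}$, and for $2\le n\le\omega$ let $X_n$ be the set of $x\in((2^{\mathbb N})^{\mathbb N})^n$ such that for every $1\le i<n$: (1) for every $m$ there is $k$ with $x(i)(k)(m)=1$; (2) for every $k$ there is $m$ with $x(i)(k)(m)=1$; (3) for all $k,l_1,l_2$, if $x(i-1)(l_1)=x(i-1)(l_2)$ then $x(i)(k)(l_1)=x(i)(k)(l_2)$. For $1\le n<\omega$, $F_n$ on $X_n$ is $x\mathrel{F_n}y\iff A^x_n=A^y_n$; $F_\omega$ on $X_\omega$ is $x\mathrel{F_\omega}y\iff A^x_j=A^y_j$ for all $1\le j<\omega$. A sequence $a\in(2^{\mathbb N})^{\mathbb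 N}$ is injective if $a(i)\ne a(j)$ for $i\ne j$, and separated if for all distinct $n,k\in\mathbb N$ there is $i$ with $a(i)(n)\ne a(i)(k)$. *)

From Stdlib Require Import Arith.

(* A point of ((2^N)^N)^omega: x i k m = x(i)(k)(m).  Points of ((2^N)^N)^n
   for finite n are encoded as points whose coordinates i >= n are identically
   false (a homeomorphic copy, closed in the big space). *)
Definition T := nat -> nat -> nat -> bool.

(* n with 1 <= n <= omega : Some m = finite m, None = omega *)
Definition lt_idx (n : option nat) (i : nat) : Prop :=
  match n with Some m => i < m | None => True end.

Definition padded (n : option nat) (x : T) : Prop :=
  match n with
  | Some m => forall i k l, m <= i -> x i k l = false
  | None => True
  end.

(* Borel sets of T = 2^(N x N x N) with the product topology: the
   sigma-algebra generated by the (clopen) subbasic cylinders. *)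
Inductive borel : (T -> Prop) -> Prop :=
| borel_cyl (i k m : nat) : borel (fun x => x i k m = true)
| borel_compl (A : T -> Prop) : borel A -> borel (fun x => ~ A x)
| borel_union (A : nat -> T -> Prop) :
    (forall j, borel (A j)) -> borel (fun x => exists j, A j x).

Definition Xn (n : option nat) (x : T) : Prop :=
  padded n x /\
  forall i, 1 <= i -> lt_idx n i ->
    (forall m, exists k, x i k m = true) /\
    (forall k, exists m, x i k m = true) /\
    (forall k l1 l2, x (i - 1) l1 = x (i - 1) l2 -> x i k l1 = x i k l2).

Fixpoint lvl (j : nat) : Type :=
  match j with
  | 0 => nat -> bool
  | S j' => lvl j' -> Prop
  end.

Fixpoint a (j : nat) (x : T) (l : nat) : lvl j :=
  match j as j0 return lvl j0 with
  | 0 => x 0 l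
  | S j' => fun s => exists k, x (S j') l k = true /\ s = a j' x k
  end.

(* AA j x = A^x_{j+1} = { a^{x,k}_j : k in N } *)
Definition AA (j : nat) (x : T) : lvl (S j) := fun s => exists k, s = a j x k.

Definition Fn (n : option nat) (x y : T) : Prop :=
  match n with
  | Some m => AA (m - 1) x = AA (m - 1) y
  | None => forall j, AA j x = AA j y
  end.

Definition injective_seq (s : nat -> nat -> bool) : Prop :=
  forall i j, i <> j -> s i <> s j.

Definition separated (s : nat -> nat -> bool) : Prop :=
  forall n k, n <> k -> exists i, s i n <> s i k.

Definition borel_reduction (n : option nat) (psi : T -> T) : Prop :=
  (forall x, Xn n x -> Xn n (psi x)) /\
  (forall B, borel B -> borel (fun x => Xn n x /\ B (psi x))) /\
  (forall x y, Xn n x -> Xn n y -> (Fn n x y <-> Fn n (psi x) (psi y))).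

(* The reduction replaces every element of A^x_{j+1} by countably many
   pairwise distinct labelled copies: copy_0 (v, r) interleaves the real v
   with the indicator of the label r, and copy_{j+1} (b, r) collects all
   copies of all elements of b together with a tag t_j(r), where t_0(r) is a
   real that no copy can equal and t_{j+1}(r) = {t_j(r)}.  Since a copy never
   equals a tag, copies determine their set and label, so A^x_{j+1} can be
   read off from A^{psi x}_{j+1}.  Labels are assigned by counting, along the
   Cantor enumeration of pairs (k, s), the earlier pairs coding the same set,
   which makes every row of psi x injective.  The new elements {o}, indexed by
   the odd columns, are singletons of the previous level and separate the
   columns.  Every bit of psi x is a Borel condition on x. *)

From Stdlib Require Import Arith Lia Cantor.
From Stdlib Require Import Classical ClassicalDescription.
From Stdlib Require Import FunctionalExtensionality PropExtensionality.

Lemma pred_ext {A : Type} (P Q : A -> Prop) : (forall s, P s <-> Q s) -> P = Q.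
Proof.
  intro H. apply functional_extensionality; intro s.
  apply propositional_extensionality; auto.
Qed.

Lemma singleton_inj {A : Type} (o o' : A) : (fun s => s = o) = (fun s => s = o') -> o = o'.
Proof.
  intro H. assert (Ho : (fun s => s = o) o) by reflexivity.
  rewrite H in Ho. exact Ho.
Qed.

Definition dec (P : Prop) : bool := if excluded_middle_informative P then true else false.

Lemma dec_true (P : Prop) : dec P = true <-> P.
Proof. unfold dec; destruct (excluded_middle_informative P); intuition congruence. Qed.

(** * Borel sets *)

Lemma borel_ext (A B : T -> Prop) : borel A -> (forall x, A x <-> B x) -> borel B.
Proof. intros HA H. rewrite <- (pred_ext A B H). exact HA. Qed.

Lemma borel_all (A : nat -> T -> Prop) :
  (forall j, borel (A j)) -> borel (fun x => forall j, A j x).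
Proof.
  intro H. apply borel_ext with (fun x => ~ exists j, ~ A j x).
  - apply borel_compl, borel_union; intro j; apply borel_compl; auto.
  - intro x; split.
    + intros H1 j. apply NNPP; intro H2; apply H1; eauto.
    + intros H1 [j Hj]; auto.
Qed.

Lemma borel_or (A B : T -> Prop) : borel A -> borel B -> borel (fun x => A x \/ B x).
Proof.
  intros HA HB. apply borel_ext with (fun x => exists j, (if Nat.eqb j 0 then A else B) x).
  - apply borel_union; intro j; destruct (Nat.eqb j 0); auto.
  - intro x; split.
    + intros [j Hj]; destruct (Nat.eqb j 0); auto.
    + intros [H|H]; [exists 0|exists 1]; auto.
Qed.

Lemma borel_and (A B : T -> Prop) : borel A -> borel B -> borel (fun x => A x /\ B x).
Proof.
  intros HA HB. apply borel_ext with (fun x => ~ (~ A x \/ ~ B x)).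
  - apply borel_compl, borel_or; apply borel_compl; auto.
  - intro x; split.
    + intro H; split; apply NNPP; intro; apply H; auto.
    + intros [] [|]; auto.
Qed.

Lemma borel_imp (A B : T -> Prop) : borel A -> borel B -> borel (fun x => A x -> B x).
Proof.
  intros HA HB. apply borel_ext with (fun x => ~ A x \/ B x).
  - apply borel_or; [apply borel_compl|]; auto.
  - intro x; split.
    + intros [H|H] H'; [contradiction|auto].
    + intro H; destruct (classic (A x)); auto.
Qed.

Lemma borel_const (P : Prop) : borel (fun _ => P).
Proof.
  assert (Htrue : borel (fun _ => True)).
  { apply borel_ext with (fun x => x 0 0 0 = true \/ ~ x 0 0 0 = true).
    - apply borel_or; [|apply borel_compl]; apply borel_cyl.
    - intro x; split; auto. intros _; apply classic. }
  destruct (classic P) as [H|H].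
  - apply (borel_ext _ _ Htrue); tauto.
  - apply (borel_ext _ _ (borel_compl _ Htrue)); tauto.
Qed.

Lemma borel_bit (i k m : nat) (b : bool) : borel (fun x => x i k m = b).
Proof.
  destruct b; [apply borel_cyl|].
  apply borel_ext with (fun x => ~ x i k m = true); [apply borel_compl, borel_cyl|].
  intro x; destruct (x i k m); intuition congruence.
Qed.

Lemma borel_bit_eq (i k m i' k' m' : nat) : borel (fun x => x i k m = x i' k' m').
Proof.
  apply borel_ext with (fun x => (x i k m = true -> x i' k' m' = true) /\
                                 (x i' k' m' = true -> x i k m = true)).
  - apply borel_and; apply borel_imp; apply borel_cyl.
  - intro x; destruct (x i k m), (x i' k' m'); intuition congruence.
Qed.

Lemma borel_row_eq (i k i' k' : nat) : borel (fun x => x i k = x i' k').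
Proof.
  apply borel_ext with (fun x => forall m, x i k m = x i' k' m).
  - apply borel_all; intro; apply borel_bit_eq.
  - intro x; split; intro H; [apply functional_extensionality; auto | rewrite H; auto].
Qed.

Lemma borel_Xn (n : option nat) : borel (Xn n).
Proof.
  apply borel_and.
  - destruct n as [m|]; simpl; [|apply (borel_const True)].
    do 3 (apply borel_all; intro).
    apply borel_imp; [apply borel_const|apply borel_bit].
  - apply borel_all; intro i.
    do 2 (apply borel_imp; [apply borel_const|]).
    apply borel_and; [|apply borel_and].
    + apply borel_all; intro; apply borel_union; intro; apply borel_cyl.
    + apply borel_all; intro; apply borel_union; intro; apply borel_cyl.
    + do 3 (apply borel_all; intro).
      apply borel_imp; [apply borel_row_eq|apply borel_bit_eq].
Qed.

Lemma a_succ_eq_iff (j : nat) (x : T) (k1 k2 : nat) :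
  a (S j) x k1 = a (S j) x k2 <->
  (forall k, x (S j) k1 k = true -> exists k', x (S j) k2 k' = true /\ a j x k = a j x k') /\
  (forall k, x (S j) k2 k = true -> exists k', x (S j) k1 k' = true /\ a j x k = a j x k').
Proof.
  split.
  - intro H. split; intros k Hk.
    + assert (Hm : a (S j) x k1 (a j x k)) by (simpl; eauto).
      rewrite H in Hm. destruct Hm as [k' [H1 H2]]; eauto.
    + assert (Hm : a (S j) x k2 (a j x k)) by (simpl; eauto).
      rewrite <- H in Hm. destruct Hm as [k' [H1 H2]]; eauto.
  - intros [H1 H2]. apply pred_ext; intro s; simpl; split.
    + intros [k [Hk ->]]. destruct (H1 k Hk) as [k' [? ?]]; eauto.
    + intros [k [Hk ->]]. destruct (H2 k Hk) as [k' [? ?]]; eauto.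
Qed.

Lemma borel_a_eq (j k1 k2 : nat) : borel (fun x => a j x k1 = a j x k2).
Proof.
  revert k1 k2; induction j as [|j IH]; intros k1 k2; [apply borel_row_eq|].
  eapply borel_ext; [|intro x; symmetry; apply a_succ_eq_iff].
  apply borel_and; apply borel_all; intro k; apply borel_imp; [apply borel_cyl| |apply borel_cyl|];
    apply borel_union; intro k'; apply borel_and; auto; apply borel_cyl.
Qed.

Lemma borel_a_mem (j k k' : nat) : borel (fun x => a (S j) x k (a j x k')).
Proof.
  apply borel_union; intro k''. apply borel_and; [apply borel_cyl|apply borel_a_eq].
Qed.

(** * Ranks in the fibres of a sequence *)

Fixpoint count_below (g : nat -> bool) (N : nat) : nat :=
  match N with 0 => 0 | S N' => count_below g N' + (if g N' then 1 else 0) end.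

Lemma count_below_mono (g : nat -> bool) (N M : nat) :
  N <= M -> count_below g N <= count_below g M.
Proof. induction 1; simpl; [lia|]. destruct (g m); lia. Qed.

Lemma count_below_lt (g : nat -> bool) (N M : nat) :
  N < M -> g N = true -> count_below g N < count_below g M.
Proof.
  intros HNM HN. pose proof (count_below_mono g (S N) M HNM) as H.
  simpl in H; rewrite HN in H; lia.
Qed.

Lemma count_below_inj (g : nat -> bool) (c1 c2 : nat) :
  g c1 = true -> g c2 = true -> count_below g c1 = count_below g c2 -> c1 = c2.
Proof.
  intros H1 H2 H.
  destruct (lt_eq_lt_dec c1 c2) as [[h|h]|h]; auto.
  - pose proof (count_below_lt g _ _ h H1); lia.
  - pose proof (count_below_lt g _ _ h H2); lia.
Qed.

Lemma count_below_surj (g : nat -> bool) :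
  (forall N, exists c, N <= c /\ g c = true) ->
  forall t, exists c, g c = true /\ count_below g c = t.
Proof.
  intros Hinf t.
  assert (Hub : exists N, t < count_below g N).
  { induction t as [|t [N HN]].
    - destruct (Hinf 0) as [c [_ Hc]]. exists (S c); simpl; rewrite Hc; lia.
    - destruct (Hinf N) as [c [Hc1 Hc2]]. exists (S c); simpl; rewrite Hc2.
      pose proof (count_below_mono g N c Hc1); lia. }
  destruct Hub as [N HN]. induction N as [|N IHN]; simpl in HN; [lia|].
  destruct (le_lt_dec (count_below g N) t) as [h|h]; auto.
  exists N. destruct (g N); split; auto; lia.
Qed.

Lemma borel_count_below (g : T -> nat -> bool) :
  (forall c, borel (fun x => g x c = true)) ->
  forall N p, borel (fun x => count_below (g x) N = p).
Proof.
  intros Hg N. induction N as [|N IH]; intro p; simpl; [apply borel_const|].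
  apply borel_ext with (fun x => (g x N = true /\ 1 <= p /\ count_below (g x) N = p - 1) \/
                                 (~ g x N = true /\ count_below (g x) N = p)).
  - apply borel_or; apply borel_and; auto.
    + apply borel_and; auto. apply borel_const.
    + apply borel_compl; auto.
  - intro x. destruct (g x N); intuition (try lia; try congruence).
Qed.

Section FiberRank.

Context {X : Type} (f : nat -> X).

(* The pairs (k', s') with f k' = f k, listed in Cantor order, are numbered
   0, 1, 2, ...; fiber_rank k s is the number given to (k, s). *)
Definition fiber_rank (k s : nat) : nat :=
  count_below (fun c => dec (f (fst (Cantor.of_nat c)) = f k)) (Cantor.to_nat (k, s)).

Lemma fiber_rank_fiber (k k' s : nat) : f k = f k' ->
  fiber_rank k s =
  count_below (fun c => dec (f (fst (Cantor.of_nat c)) = f k')) (Cantor.to_nat (k, s)).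
Proof. intro H. unfold fiber_rank. rewrite H. reflexivity. Qed.

Lemma fiber_rank_inj (k1 s1 k2 s2 : nat) :
  f k1 = f k2 -> fiber_rank k1 s1 = fiber_rank k2 s2 -> k1 = k2 /\ s1 = s2.
Proof.
  intros Hf Hr. rewrite (fiber_rank_fiber k1 k2 s1 Hf) in Hr. unfold fiber_rank in Hr.
  apply count_below_inj in Hr; try (rewrite Cantor.cancel_of_to; apply dec_true; auto).
  apply Cantor.to_nat_inj in Hr. injection Hr; auto.
Qed.

Lemma fiber_rank_surj (k t : nat) : exists k' s', f k' = f k /\ fiber_rank k' s' = t.
Proof.
  destruct (count_below_surj (fun c => dec (f (fst (Cantor.of_nat c)) = f k))) with t
    as [c [Hc Hct]].
  - intro N. exists (Cantor.to_nat (k, N)). split.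
    + pose proof (Cantor.to_nat_non_decreasing k N); lia.
    + rewrite Cantor.cancel_of_to. apply dec_true; auto.
  - rewrite dec_true in Hc.
    exists (fst (Cantor.of_nat c)), (snd (Cantor.of_nat c)). split; auto.
    rewrite (fiber_rank_fiber _ _ _ Hc), <- surjective_pairing, Cantor.cancel_to_of. exact Hct.
Qed.

End FiberRank.

Lemma borel_fiber_rank {X : Type} (g : T -> nat -> X) :
  (forall k1 k2, borel (fun x => g x k1 = g x k2)) ->
  forall k s p, borel (fun x => fiber_rank (g x) k s = p).
Proof.
  intros Hg k s. apply borel_count_below. intro c.
  apply borel_ext with (fun x => g x (fst (Cantor.of_nat c)) = g x k); [apply Hg|].
  intro x; rewrite dec_true; tauto.
Qed.

(** * Labelled copies and tags *)

Definition copy0 (v : nat -> bool) (r m : nat) : bool :=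
  match m with
  | 0 => false
  | S p => if Nat.even p then v (Nat.div2 p) else Nat.eqb (Nat.div2 p) r
  end.

Definition tag0 (r m : nat) : bool :=
  match m with 0 => true | S p => Nat.eqb p r end.

Fixpoint tag (j : nat) (r : nat) : lvl j :=
  match j as j0 return lvl j0 with
  | 0 => tag0 r
  | S j' => fun s => s = tag j' r
  end.

Fixpoint copy (j : nat) : lvl j -> nat -> lvl j :=
  match j as j0 return lvl j0 -> nat -> lvl j0 with
  | 0 => copy0
  | S j' => fun b r s => (exists c t, b c /\ s = copy j' c t) \/ s = tag j' r
  end.

Fixpoint hereditarily_nonempty (j : nat) : lvl j -> Prop :=
  match j as j0 return lvl j0 -> Prop with
  | 0 => fun _ => True
  | S j' => fun b => (exists c, b c) /\ forall c, b c -> hereditarily_nonempty j' c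
  end.

Lemma even_double (c : nat) : Nat.even (2 * c) = true.
Proof. rewrite Nat.even_mul; auto. Qed.

Lemma even_double_plus_one (c : nat) : Nat.even (2 * c + 1) = false.
Proof. rewrite Nat.even_add, Nat.even_mul; auto. Qed.

Lemma div2_double_plus_one (c : nat) : Nat.div2 (2 * c + 1) = c.
Proof. rewrite Nat.add_1_r. apply Nat.div2_succ_double. Qed.

Lemma copy0_even_bit (v : nat -> bool) (r p : nat) : copy0 v r (S (2 * p)) = v p.
Proof. unfold copy0; cbv beta iota. rewrite even_double, Nat.div2_double. reflexivity. Qed.

Lemma copy0_odd_bit (v : nat -> bool) (r p : nat) : copy0 v r (S (2 * p + 1)) = Nat.eqb p r.
Proof.
  unfold copy0; cbv beta iota. rewrite even_double_plus_one, div2_double_plus_one. reflexivity.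
Qed.

Lemma copy0_inj (v v' : nat -> bool) (r r' : nat) : copy0 v r = copy0 v' r' -> v = v' /\ r = r'.
Proof.
  intro H. split.
  - apply functional_extensionality; intro p.
    rewrite <- (copy0_even_bit v r), <- (copy0_even_bit v' r'), H. reflexivity.
  - assert (Hr : copy0 v r (S (2 * r + 1)) = copy0 v' r' (S (2 * r + 1)))
      by (rewrite H; reflexivity).
    rewrite !copy0_odd_bit, Nat.eqb_refl in Hr. symmetry in Hr; apply Nat.eqb_eq in Hr; auto.
Qed.

Lemma copy0_neq_tag0 (v : nat -> bool) (r r' : nat) : copy0 v r <> tag0 r'.
Proof. intro H. discriminate (f_equal (fun w => w 0) H). Qed.

Lemma tag_inj (j r r' : nat) : tag j r = tag j r' -> r = r'.
Proof.
  induction j as [|j IH]; simpl; intro H.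
  - assert (Hr := f_equal (fun w => w (S r)) H); simpl in Hr.
    rewrite Nat.eqb_refl in Hr. symmetry in Hr; apply Nat.eqb_eq in Hr; auto.
  - exact (IH (singleton_inj _ _ H)).
Qed.

Lemma copy_neq_tag (j : nat) (b : lvl j) (r r' : nat) :
  hereditarily_nonempty j b -> copy j b r <> tag j r'.
Proof.
  revert b r r'; induction j as [|j IH]; intros b r r' Hb H; [exact (copy0_neq_tag0 _ _ _ H)|].
  destruct Hb as [[c Hc] Hall].
  assert (Hm : copy (S j) b r (copy j c 0)) by (left; eauto).
  rewrite H in Hm. exact (IH c 0 r' (Hall c Hc) Hm).
Qed.

Lemma copy_succ_neq_singleton (j : nat) (b : lvl (S j)) (r : nat) (o : lvl j) :
  hereditarily_nonempty (S j) b -> copy (S j) b r <> (fun s => s = o).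
Proof.
  intros [[c Hc] Hall] H.
  assert (H1 : copy (S j) b r (copy j c 0)) by (left; eauto).
  assert (H2 : copy (S j) b r (tag j r)) by (right; auto).
  rewrite H in H1, H2. apply (copy_neq_tag j c 0 r (Hall c Hc)). congruence.
Qed.

(* A copy of a hereditarily nonempty set remembers both the set (through the
   copies of its elements) and the label (through its only tag). *)
Lemma copy_inj (j : nat) (b b' : lvl j) (r r' : nat) :
  hereditarily_nonempty j b -> hereditarily_nonempty j b' ->
  copy j b r = copy j b' r' -> b = b' /\ r = r'.
Proof.
  revert b b' r r'; induction j as [|j IH]; intros b b' r r' Hb Hb' H;
    [exact (copy0_inj _ _ _ _ H)|].
  assert (Hsub : forall b b' r r', hereditarily_nonempty (S j) b ->
                 hereditarily_nonempty (S j) b' -> copy (S j) b r = copy (S j) b' r' ->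
                 forall c, b c -> b' c).
  { clear b b' r r' Hb Hb' H. intros b b' r r' Hb Hb' H c Hc.
    assert (Hm : copy (S j) b r (copy j c 0)) by (left; eauto).
    rewrite H in Hm. destruct Hm as [[c' [t [Hc' Heq]]]|Heq].
    - destruct (IH c c' 0 t (proj2 Hb c Hc) (proj2 Hb' c' Hc') Heq) as [-> _]; exact Hc'.
    - destruct (copy_neq_tag j c 0 r' (proj2 Hb c Hc) Heq). }
  split.
  - apply pred_ext; intro c; split; [apply (Hsub b b' r r')|apply (Hsub b' b r' r)]; auto.
  - assert (Ht : copy (S j) b' r' (tag j r)) by (rewrite <- H; right; reflexivity).
    destruct Ht as [[c [t [Hc Heq]]]|Heq].
    + destruct (copy_neq_tag j c t r (proj2 Hb' c Hc) (eq_sym Heq)).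
    + exact (tag_inj j r r' Heq).
Qed.

Fixpoint tag_index (j r : nat) : nat :=
  match j with 0 => 2 * r + 1 | S j' => 2 * tag_index j' r + 1 end.

(* Entry 2 * to_nat (k, s) of row i codes the copy of a^{x,k}_i labelled by
   the rank of (k, s) in its fibre; entry 2 q + 1 codes t_0(q) in row 0 and,
   in row i + 1, the singleton of the q-th element of level i. *)
Definition reduce (x : T) (i l : nat) : nat -> bool :=
  let k := fst (Cantor.of_nat (Nat.div2 l)) in
  let s := snd (Cantor.of_nat (Nat.div2 l)) in
  match i, Nat.even l with
  | 0, true => copy0 (x 0 k) (fiber_rank (a 0 x) k s)
  | 0, false => tag0 (Nat.div2 l)
  | S j, true => fun m => dec (
      (exists k' s', m = 2 * Cantor.to_nat (k', s') /\ a (S j) x k (a j x k')) \/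
      m = tag_index j (fiber_rank (a (S j) x) k s))
  | S j, false => fun m => Nat.eqb m (Nat.div2 l)
  end.

Definition truncate (n : option nat) (y : T) : T :=
  fun i => if dec (lt_idx n i) then y i else fun _ _ => false.

Lemma index_cases (l : nat) :
  (exists k s, l = 2 * Cantor.to_nat (k, s)) \/ (exists q, l = 2 * q + 1).
Proof.
  destruct (Nat.Even_or_Odd l) as [[c ->]|[q ->]]; [left|right; eauto].
  exists (fst (Cantor.of_nat c)), (snd (Cantor.of_nat c)).
  rewrite <- surjective_pairing, Cantor.cancel_to_of; reflexivity.
Qed.

Lemma reduce_0_even (x : T) (k s : nat) :
  reduce x 0 (2 * Cantor.to_nat (k, s)) = copy0 (x 0 k) (fiber_rank (a 0 x) k s).
Proof. unfold reduce. rewrite even_double, Nat.div2_double, Cantor.cancel_of_to. reflexivity. Qed.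

Lemma reduce_0_odd (x : T) (q : nat) : reduce x 0 (2 * q + 1) = tag0 q.
Proof. unfold reduce. rewrite even_double_plus_one, div2_double_plus_one. reflexivity. Qed.

Lemma reduce_succ_even (x : T) (j k s m : nat) :
  reduce x (S j) (2 * Cantor.to_nat (k, s)) m = true <->
  (exists k' s', m = 2 * Cantor.to_nat (k', s') /\ a (S j) x k (a j x k')) \/
  m = tag_index j (fiber_rank (a (S j) x) k s).
Proof.
  unfold reduce. rewrite even_double, Nat.div2_double, Cantor.cancel_of_to. apply dec_true.
Qed.

Lemma reduce_succ_odd (x : T) (j q m : nat) : reduce x (S j) (2 * q + 1) m = Nat.eqb m q.
Proof. unfold reduce. rewrite even_double_plus_one, div2_double_plus_one. reflexivity. Qed.

Lemma truncate_inside (n : option nat) (y : T) (i : nat) : lt_idx n i -> truncate n y i = y i.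
Proof.
  intro H. unfold truncate. rewrite (proj2 (dec_true _) H). reflexivity.
Qed.

Lemma lt_idx_pred (n : option nat) (i j : nat) : i <= j -> lt_idx n j -> lt_idx n i.
Proof. destruct n; simpl; auto; lia. Qed.

Lemma a_truncate (n : option nat) (y : T) (j : nat) : lt_idx n j -> a j (truncate n y) = a j y.
Proof.
  induction j as [|j IH]; intro Hj; apply functional_extensionality; intro l; simpl.
  - rewrite truncate_inside; auto.
  - rewrite truncate_inside, IH; auto. apply (lt_idx_pred n j (S j)); auto.
Qed.

Lemma AA_truncate (n : option nat) (y : T) (j : nat) : lt_idx n j -> AA j (truncate n y) = AA j y.
Proof. intro Hj. unfold AA. rewrite a_truncate; auto. Qed.

Lemma borel_reduce_bit (i l m : nat) : borel (fun x => reduce x i l m = true).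
Proof.
  destruct (index_cases l) as [[k [s ->]]|[q ->]]; destruct i as [|j].
  - apply borel_ext with (fun x => copy0 (x 0 k) (fiber_rank (a 0 x) k s) m = true);
      [|intro x; rewrite reduce_0_even; reflexivity].
    destruct m as [|p]; cbn [copy0]; [apply borel_const|].
    destruct (Nat.even p); [apply borel_cyl|].
    apply borel_ext with (fun x => fiber_rank (a 0 x) k s = Nat.div2 p).
    + apply borel_fiber_rank, borel_a_eq.
    + intro x. rewrite Nat.eqb_eq. intuition.
  - apply borel_ext with (fun x =>
      (exists k' s', m = 2 * Cantor.to_nat (k', s') /\ a (S j) x k (a j x k')) \/
      (exists p, fiber_rank (a (S j) x) k s = p /\ m = tag_index j p)).
    + apply borel_or.
      * do 2 (apply borel_union; intro). apply borel_and; [apply borel_const|apply borel_a_mem].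
      * apply borel_union; intro p. apply borel_and; [|apply borel_const].
        apply borel_fiber_rank, borel_a_eq.
    + intro x. rewrite reduce_succ_even.
      split; (intros [H|H]; [left; exact H|right]); [destruct H as [p [<- ->]]|]; eauto.
  - apply borel_ext with (fun _ => tag0 q m = true);
      [apply borel_const|intro x; rewrite reduce_0_odd; reflexivity].
  - apply borel_ext with (fun _ => Nat.eqb m q = true);
      [apply borel_const|intro x; rewrite reduce_succ_odd; reflexivity].
Qed.

Lemma borel_preimage_truncate_reduce (n : option nat) (B : T -> Prop) :
  borel B -> borel (fun x => B (truncate n (reduce x))).
Proof.
  induction 1 as [i k m| |A _ IH].
  - unfold truncate. destruct (dec (lt_idx n i)); [apply borel_reduce_bit|apply borel_const].
  - apply borel_compl; auto.
  - apply (borel_union (fun j x => A j (truncate n (reduce x)))); auto.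
Qed.

Lemma a_reduce_succ_odd (x : T) (j q : nat) :
  a (S j) (reduce x) (2 * q + 1) = fun s => s = a j (reduce x) q.
Proof.
  apply pred_ext; intro s; simpl. setoid_rewrite reduce_succ_odd. split.
  - intros [k [Hk ->]]. apply Nat.eqb_eq in Hk; subst; auto.
  - intros ->. exists q. rewrite Nat.eqb_refl; auto.
Qed.

Lemma a_reduce_tag (x : T) (j r : nat) : a j (reduce x) (tag_index j r) = tag j r.
Proof.
  induction j as [|j IH]; [apply reduce_0_odd|].
  change (tag_index (S j) r) with (2 * tag_index j r + 1).
  rewrite a_reduce_succ_odd, IH. reflexivity.
Qed.

Lemma a_reduce_even (x : T) (j k s : nat) :
  a j (reduce x) (2 * Cantor.to_nat (k, s)) = copy j (a j x k) (fiber_rank (a j x) k s).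
Proof.
  revert k s; induction j as [|j IH]; intros k s; [apply reduce_0_even|].
  apply pred_ext; intro u. change (a (S j) (reduce x) (2 * Cantor.to_nat (k, s)) u) with
    (exists m, reduce x (S j) (2 * Cantor.to_nat (k, s)) m = true /\ u = a j (reduce x) m).
  setoid_rewrite reduce_succ_even. split.
  - intros [m [[[k' [s' [-> Hk']]]| ->] ->]].
    + left. rewrite IH. do 2 eexists; split; [exact Hk'|reflexivity].
    + right. apply a_reduce_tag.
  - intros [[c [t [[k' [Hk' ->]] ->]]]| ->].
    + destruct (fiber_rank_surj (a j x) k' t) as [k'' [s'' [Ha Ht]]].
      exists (2 * Cantor.to_nat (k'', s'')). rewrite IH, Ha, Ht. split; auto.
      left. exists k'', s''. split; auto. rewrite Ha. exists k'. auto.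
    + exists (tag_index j (fiber_rank (a (S j) x) k s)). rewrite a_reduce_tag. auto.
Qed.

Lemma AA_reduce_0 (x : T) :
  AA 0 (reduce x) = fun u => (exists v r, AA 0 x v /\ u = copy0 v r) \/ exists q, u = tag0 q.
Proof.
  apply pred_ext; intro u. split.
  - intros [l ->]. destruct (index_cases l) as [[k [s ->]]|[q ->]].
    + left. change (a 0 (reduce x) (2 * Cantor.to_nat (k, s))) with
        (reduce x 0 (2 * Cantor.to_nat (k, s))).
      rewrite reduce_0_even. do 2 eexists; split; [exists k|]; reflexivity.
    + right. exists q. apply reduce_0_odd.
  - intros [[v [r [[k ->] ->]]] | [q ->]].
    + destruct (fiber_rank_surj (a 0 x) k r) as [k' [s' [Ha Hr]]].
      exists (2 * Cantor.to_nat (k', s')). rewrite (a_reduce_even x 0), Ha, Hr. reflexivity.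
    + exists (2 * q + 1). symmetry; apply reduce_0_odd.
Qed.

Lemma AA_reduce_succ (x : T) (j : nat) :
  AA (S j) (reduce x) = fun u => (exists b r, AA (S j) x b /\ u = copy (S j) b r) \/
                                 (exists o, AA j (reduce x) o /\ u = (fun s => s = o)).
Proof.
  apply pred_ext; intro u. split.
  - intros [l ->]. destruct (index_cases l) as [[k [s ->]]|[q ->]].
    + left. rewrite a_reduce_even. do 2 eexists; split; [exists k|]; reflexivity.
    + right. rewrite a_reduce_succ_odd. eexists; split; [exists q|]; reflexivity.
  - intros [[b [r [[k ->] ->]]] | [o [[q ->] ->]]].
    + destruct (fiber_rank_surj (a (S j) x) k r) as [k' [s' [Ha Hr]]].
      exists (2 * Cantor.to_nat (k', s')). rewrite a_reduce_even, Ha, Hr. reflexivity.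
    + exists (2 * q + 1). rewrite a_reduce_succ_odd. reflexivity.
Qed.

Lemma AA_reduce_compat (x y : T) (j : nat) :
  (forall i, i <= j -> AA i x = AA i y) -> AA j (reduce x) = AA j (reduce y).
Proof.
  induction j as [|j IH]; intro H.
  - rewrite !AA_reduce_0, (H 0); auto.
  - rewrite !AA_reduce_succ, (H (S j)), IH; auto.
Qed.

Definition rows_nonempty (x : T) (j : nat) : Prop :=
  forall i k, 0 < i <= j -> exists m, x i k m = true.

Lemma rows_nonempty_pred (x : T) (j : nat) : rows_nonempty x (S j) -> rows_nonempty x j.
Proof. intros H i k Hi. apply H; lia. Qed.

Lemma hereditarily_nonempty_a (x : T) (j : nat) :
  rows_nonempty x j -> forall k, hereditarily_nonempty j (a j x k).
Proof.
  induction j as [|j IH]; intros Hx k; simpl; auto. split.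
  - destruct (Hx (S j) k) as [m Hm]; [lia|]. exists (a j x m), m; auto.
  - intros c [k' [_ ->]]. apply IH, rows_nonempty_pred; auto.
Qed.

Lemma AA_reduce_cancel_incl (x y : T) (j : nat) :
  rows_nonempty x j -> rows_nonempty y j -> AA j (reduce x) = AA j (reduce y) ->
  forall b, AA j x b -> AA j y b.
Proof.
  intros Hx Hy H b Hb. destruct j as [|j].
  - assert (Hm : AA 0 (reduce x) (copy0 b 0)) by (rewrite AA_reduce_0; left; eauto).
    rewrite H, AA_reduce_0 in Hm.
    destruct Hm as [[v [r [Hv Heq]]]|[q Heq]].
    + destruct (copy0_inj _ _ _ _ Heq) as [-> _]; exact Hv.
    + destruct (copy0_neq_tag0 _ _ _ Heq).
  - assert (Hb_ne : hereditarily_nonempty (S j) b)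
      by (destruct Hb as [k ->]; apply hereditarily_nonempty_a; auto).
    assert (Hm : AA (S j) (reduce x) (copy (S j) b 0)) by (rewrite AA_reduce_succ; left; eauto).
    rewrite H, AA_reduce_succ in Hm.
    destruct Hm as [[b' [r [Hb' Heq]]]|[o [_ Heq]]].
    + assert (Hb'_ne : hereditarily_nonempty (S j) b')
        by (destruct Hb' as [k ->]; apply hereditarily_nonempty_a; auto).
      destruct (copy_inj _ _ _ _ _ Hb_ne Hb'_ne Heq) as [-> _]; exact Hb'.
    + destruct (copy_succ_neq_singleton _ _ _ _ Hb_ne Heq).
Qed.

Lemma AA_reduce_cancel (x y : T) (j : nat) :
  rows_nonempty x j -> rows_nonempty y j -> AA j (reduce x) = AA j (reduce y) -> AA j x = AA j y.
Proof.
  intros Hx Hy H. apply pred_ext; intro b; split; apply AA_reduce_cancel_incl; auto.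
Qed.

Lemma a_row_determined (y : T) (j l1 l2 : nat) : y j l1 = y j l2 -> a j y l1 = a j y l2.
Proof. destruct j; simpl; intro H; rewrite ?H; reflexivity. Qed.

Lemma a_reduce_inj (x : T) (j : nat) :
  rows_nonempty x j -> forall l1 l2, a j (reduce x) l1 = a j (reduce x) l2 -> l1 = l2.
Proof.
  induction j as [|j IH]; intros Hx l1 l2 H;
    destruct (index_cases l1) as [[k1 [s1 ->]]|[q1 ->]];
    destruct (index_cases l2) as [[k2 [s2 ->]]|[q2 ->]];
    rewrite ?a_reduce_even, ?a_reduce_succ_odd in H.
  - destruct (copy0_inj _ _ _ _ H) as [Hv Hr].
    destruct (fiber_rank_inj (a 0 x) _ _ _ _ Hv Hr) as [-> ->]; reflexivity.
  - change (a 0 (reduce x) (2 * q2 + 1)) with (reduce x 0 (2 * q2 + 1)) in H.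
    rewrite reduce_0_odd in H. destruct (copy0_neq_tag0 _ _ _ H).
  - change (a 0 (reduce x) (2 * q1 + 1)) with (reduce x 0 (2 * q1 + 1)) in H.
    rewrite reduce_0_odd in H. destruct (copy0_neq_tag0 _ _ _ (eq_sym H)).
  - change (reduce x 0 (2 * q1 + 1) = reduce x 0 (2 * q2 + 1)) in H.
    rewrite !reduce_0_odd in H. rewrite (tag_inj 0 q1 q2 H). reflexivity.
  - destruct (copy_inj _ _ _ _ _ (hereditarily_nonempty_a x _ Hx k1)
                (hereditarily_nonempty_a x _ Hx k2) H) as [Hb Hr].
    destruct (fiber_rank_inj _ _ _ _ _ Hb Hr) as [-> ->]; reflexivity.
  - destruct (copy_succ_neq_singleton _ _ _ _ (hereditarily_nonempty_a x _ Hx k1) H).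
  - destruct (copy_succ_neq_singleton _ _ _ _ (hereditarily_nonempty_a x _ Hx k2) (eq_sym H)).
  - assert (Hq := singleton_inj _ _ H).
    rewrite (IH (rows_nonempty_pred _ _ Hx) _ _ Hq). reflexivity.
Qed.

Lemma reduce_row_inj (x : T) (j l1 l2 : nat) :
  rows_nonempty x j -> reduce x j l1 = reduce x j l2 -> l1 = l2.
Proof. intros Hx H. apply (a_reduce_inj x j Hx), a_row_determined, H. Qed.

Lemma reduce_row_separated (x : T) (j : nat) : separated (reduce x (S j)).
Proof.
  intros p q Hpq. exists (2 * p + 1). rewrite !reduce_succ_odd, Nat.eqb_refl.
  intro H. symmetry in H. apply Nat.eqb_eq in H. auto.
Qed.

Lemma Xn_rows_nonempty (n : option nat) (x : T) (j : nat) :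
  Xn n x -> lt_idx n j -> rows_nonempty x j.
Proof.
  intros [_ HX] Hj i k Hi. apply (HX i); [lia|apply (lt_idx_pred n i j); [lia|auto]].
Qed.

Lemma Xn_truncate_reduce (n : option nat) (x : T) : Xn n x -> Xn n (truncate n (reduce x)).
Proof.
  intro Hx. split.
  - destruct n as [m|]; simpl; auto. intros i k l Hi. unfold truncate.
    destruct (dec (lt_idx (Some m) i)) eqn:E; auto.
    rewrite dec_true in E. simpl in E. lia.
  - intros [|j] Hi Hj; [lia|]. replace (S j - 1) with j by lia.
    assert (Hj' : lt_idx n j) by (apply (lt_idx_pred n j (S j)); auto).
    rewrite !truncate_inside by auto. split; [|split].
    + intro m. exists (2 * m + 1). rewrite reduce_succ_odd. apply Nat.eqb_refl.
    + intro l. destruct (index_cases l) as [[k [s ->]]|[q ->]].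
      * eexists. apply reduce_succ_even. right; reflexivity.
      * exists q. rewrite reduce_succ_odd. apply Nat.eqb_refl.
    + intros k l1 l2 Hl.
      rewrite (reduce_row_inj x j l1 l2 (Xn_rows_nonempty n x j Hx Hj') Hl). reflexivity.
Qed.

Lemma AA_eq_below (n : option nat) (x y : T) (J : nat) :
  Xn n x -> Xn n y -> lt_idx n J -> AA J x = AA J y -> forall i, i <= J -> AA i x = AA i y.
Proof.
  (* Condition (1) of X_n says that A^x_{j+1} covers A^x_j. *)
  assert (Hcover : forall z j, Xn n z -> lt_idx n (S j) ->
                   AA j z = fun o => exists b, AA (S j) z b /\ b o).
  { intros z j [_ HX] Hj. destruct (HX (S j) ltac:(lia) Hj) as [Hcol _].
    apply pred_ext; intro o. split.
    - intros [k ->]. destruct (Hcol k) as [l Hl].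
      exists (a (S j) z l). split; [exists l; auto|exists k; auto].
    - intros [b [[l ->] [k [_ ->]]]]. exists k; auto. }
  intros Hx Hy. induction J as [|J IH]; intros HJ H i Hi.
  - replace i with 0 by lia; auto.
  - destruct (Nat.eq_dec i (S J)) as [->|Hne]; auto.
    apply IH; [apply (lt_idx_pred n J (S J)); auto| |lia].
    rewrite (Hcover x J), (Hcover y J), H; auto.
Qed.

Lemma Fn_truncate_reduce_iff (n : option nat) (x y : T) :
  (forall m, n = Some m -> 1 <= m) -> Xn n x -> Xn n y ->
  (Fn n x y <-> Fn n (truncate n (reduce x)) (truncate n (reduce y))).
Proof.
  intros hn Hx Hy.
  assert (Hlevel : forall j, lt_idx n j ->
            (AA j (truncate n (reduce x)) = AA j (truncate n (reduce y)) <->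
             AA j (reduce x) = AA j (reduce y))).
  { intros j Hj. rewrite !AA_truncate by auto. tauto. }
  destruct n as [m|]; unfold Fn.
  - assert (Hm : lt_idx (Some m) (m - 1)) by (specialize (hn m eq_refl); simpl; lia).
    rewrite Hlevel by auto. split; intro H.
    + apply AA_reduce_compat. apply (AA_eq_below (Some m) x y (m - 1)); auto.
    + apply AA_reduce_cancel; auto; eapply Xn_rows_nonempty; eauto.
  - split; intros H j.
    + apply (Hlevel j I), AA_reduce_compat; auto.
    + apply AA_reduce_cancel; [apply (Xn_rows_nonempty None x j Hx I)
                              |apply (Xn_rows_nonempty None y j Hy I)
                              |apply (Hlevel j I), H].
Qed.

Theorem lemma5p2 (n : option nat) (hn : forall m, n = Some m -> 1 <= m) :
  exists psi : T -> T,
    borel_reduction n psi /\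
    (forall x, Xn n x ->
       (forall i, lt_idx n i -> injective_seq (psi x i)) /\
       (forall i, 0 < i -> lt_idx n i -> separated (psi x i))).
Proof.
  exists (fun x => truncate n (reduce x)). split; [split; [|split]|].
  - apply Xn_truncate_reduce.
  - intros B HB. apply borel_and; [apply borel_Xn|apply borel_preimage_truncate_reduce; auto].
  - intros x y Hx Hy. apply Fn_truncate_reduce_iff; auto.
  - intros x Hx. split.
    + intros i Hi l1 l2 Hne Heq. rewrite truncate_inside in Heq by auto.
      exact (Hne (reduce_row_inj x i l1 l2 (Xn_rows_nonempty n x i Hx Hi) Heq)).
    + intros [|j] Hj Hi; [lia|]. rewrite truncate_inside by auto. apply reduce_row_separated.
Qed.
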